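(* Let $\delta'\in(0,1)$ and fix $X\in\mathcal X$. On the event $\mathcal E_{U,m}(\delta')$, for each $i\in[m]$ the map $\theta_i=(U_i,\operatorname{vec}(W_i))\mapsto h(X;\theta_i)$, restricted to $\{U_i:\|U_i-U_i^{(0)}\|_2\le\rho_u/\sqrt m\}\times\{W_i:\|W_i-W_i^{(0)}\|_F\le\rho_w/\sqrt m\}$, is $L_{1,m}(\delta')$-Lipschitz and $L_{2,m}(\delta')$-smooth (its gradient is $L_{2,m}(\delta')$-Lipschitz), where $L_{1,m}(\delta')=\sigma_1\sqrt{1+B_{U,m}(\delta')^2}$ and $L_{2,m}(\delta')=\sigma_2(1+B_{U,m}(\delta')^2)+8\sigma_1\sqrt{1+B_{U,m}(\delta')^2}$, with $B_{U,m}(\delta')=\sqrt d+\sqrt{2\log(m/(2\delta'))}+\rho_u/\sqrt m$.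
   Context: $\mathcal{X}=\{X=(X_1,\dots,X_T)\in\mathbb{R}^{d\times T}:\max_t\|X_t\|_2\le1\}$; each $X$ has a fixed query $q_X\in\mathbb{R}^d$, $\|q_X\|_2\le1$. Softmax $(\sigma_s(z))_t=e^{z_t}/\sum_se^{z_s}$; $a(X;W)=X\sigma_s(X^\top Wq_X)$; $h(X;\theta)=\sigma(U^\top a(X;W))$ for $\theta=(U,\operatorname{vec}(W))$, $U\in\mathbb{R}^d,W\in\mathbb{R}^{d\times d}$. $\sigma:\mathbb{R}\to\mathbb{R}$ twice differentiable with $|\sigma|\le\sigma_0,|\sigma'|\le\sigma_1,|\sigma''|\le\sigma_2$. $m$ even; $\rho_u,\rho_w>0$. Symmetric initialization: for $i\le m/2$, independently, $W_i^{(0)}$ with i.i.d. $\mathcal N(0,1)$ entries, $U_i^{(0)}\sim\mathcal N(0,I_d)$, $c_i^{(0)}$ uniform on $\{\pm1\}$, and $W_{i+m/2}^{(0)}=W_i^{(0)}$, $U_{i+m/2}^{(0)}=U_i^{(0)}$, $c_{i+m/2}^{(0)}=-c_i^{(0)}$. $\mathcal E_{U,m}(\delta')=\{\max_{i\in[m]}\|U_i^{(0)}\|_2\le\sqrt d+\sqrt{2\log(m/(2\delta'))}\}$. Norms on $\theta$ are Euclidean (Frobenius on the $W$ block). *)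

From HB Require Import structures.
From mathcomp Require Import all_boot all_order all_algebra.
From mathcomp Require Import all_classical all_reals all_analysis.
Set Implicit Arguments. Unset Strict Implicit. Unset Printing Implicit Defensive.
Import Order.TTheory GRing.Theory Num.Theory.
Import numFieldNormedType.Exports.
Local Open Scope ring_scope.

Section Defs.
Variable R : realType.

Definition enormc (n : nat) (v : 'cV[R]_n) : R := Num.sqrt (\sum_i v i 0 ^+ 2).
Definition enormr (n : nat) (v : 'rV[R]_n) : R := Num.sqrt (\sum_i v 0 i ^+ 2).
Definition fnorm (n p : nat) (A : 'M[R]_(n, p)) : R :=
  Num.sqrt (\sum_i \sum_j A i j ^+ 2).

Definition softmax (T : nat) (z : 'cV[R]_T) : 'cV[R]_T :=
  \col_t (expR (z t 0) / \sum_s expR (z s 0)).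

Definition attn (d T : nat) (X : 'M[R]_(d, T)) (q : 'cV[R]_d) (W : 'M[R]_d)
  : 'cV[R]_d := X *m softmax (X^T *m W *m q).

Definition hnet (sigma : R -> R) (d T : nat) (X : 'M[R]_(d, T)) (q : 'cV[R]_d)
  (U : 'cV[R]_d) (W : 'M[R]_d) : R := sigma ((U^T *m attn X q W) 0 0).

(* parameter vector theta = (U, vec W) in R^(d + d*d) *)
Definition thU (d : nat) (th : 'rV[R]_(d + d * d)) : 'cV[R]_d := (lsubmx th)^T.
Definition thW (d : nat) (th : 'rV[R]_(d + d * d)) : 'M[R]_d := vec_mx (rsubmx th).

Definition hth (sigma : R -> R) (d T : nat) (X : 'M[R]_(d, T)) (q : 'cV[R]_d)
  (th : 'rV[R]_(d + d * d)) : R := hnet sigma X q (thU th) (thW th).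

Definition grad (n : nat) (f : 'rV[R]_n -> R) (th : 'rV[R]_n) : 'rV[R]_n :=
  \row_k ('D_(delta_mx 0 k) f th).

Definition B_Um (d m : nat) (dl rho_u : R) : R :=
  Num.sqrt d%:R + Num.sqrt (2 * ln (m%:R / (2 * dl))) + rho_u / Num.sqrt m%:R.
Definition L1m (s1 : R) (d m : nat) (dl rho_u : R) : R :=
  s1 * Num.sqrt (1 + B_Um d m dl rho_u ^+ 2).
Definition L2m (s1 s2 : R) (d m : nat) (dl rho_u : R) : R :=
  s2 * (1 + B_Um d m dl rho_u ^+ 2) + 8 * s1 * Num.sqrt (1 + B_Um d m dl rho_u ^+ 2).

End Defs.

(* Write h(X; theta) = sigma (g theta), where g theta = sum_t p_t a_t is the mean of the
   scores a_t = X_t^T U under the softmax weights p of the logits z_t = X_t^T W q.  Both a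
   and z are linear in theta, and the derivative of a softmax mean is the mean of the
   derivatives plus the covariance with the derivative of the logits.  For a direction
   v = (u, V) one has |a_t(v)| <= |u| and |z_t(v)| <= |V|_F, and a variable bounded by B
   has covariance at most B K with one bounded by K; hence wherever all |a_t| <= B,
   |D_v g| <= |u| + B |V|_F <= sqrt(1 + B^2) |v|, and differentiating once more gives
   |D_v D_w g| <= 5 sqrt(1 + B^2) |v| |w|.  On the parameter set
   |a_t| <= |U_i^(0)| + rho_u / sqrt m <= B_{U,m}, and since a_t is linear this bound
   persists along segments, so the mean value theorem yields the Lipschitz bound for h
   and, applied to theta |-> D_w h(theta) with w = grad h(theta) - grad h(theta'), for
   which |w|^2 = D_w h(theta) - D_w h(theta'), the one for grad h.  None of the bounds
   depends on W. *)

From HB Require Import structures.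
From mathcomp Require Import all_boot all_order all_algebra.
From mathcomp Require Import all_classical all_reals all_analysis.
From mathcomp Require Import ring lra.
Import Order.TTheory GRing.Theory Num.Theory.
Import numFieldNormedType.Exports.
Set Implicit Arguments. Unset Strict Implicit. Unset Printing Implicit Defensive.
Local Open Scope classical_set_scope.
Local Open Scope ring_scope.

(** * Euclidean norms and weighted means *)

Section EuclideanNorm.
Variables (R : realType) (n : nat).
Implicit Types F G : 'I_n -> R.

Definition l2norm F := Num.sqrt (\sum_i F i ^+ 2).

Lemma sumsq_ge0 F : 0 <= \sum_i F i ^+ 2.
Proof. by apply: sumr_ge0 => i _; exact: sqr_ge0. Qed.

Lemma cauchy_schwarz_sqr F G :
  (\sum_i F i * G i) ^+ 2 <= (\sum_i F i ^+ 2) * (\sum_i G i ^+ 2).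
Proof.
have expand c b : \sum_i (c * F i - b * G i) ^+ 2 =
    c ^+ 2 * (\sum_i F i ^+ 2) - 2 * c * b * (\sum_i F i * G i) + b ^+ 2 * (\sum_i G i ^+ 2).
  by rewrite !mulr_sumr -sumrB -big_split /=; apply: eq_bigr => i _; ring.
have := sumsq_ge0 (fun i => (\sum_j G j ^+ 2) * F i - (\sum_j F j * G j) * G i).
rewrite expand; have := sumsq_ge0 G.
set A := \sum_i F i ^+ 2; set C := \sum_i G i ^+ 2; set P := \sum_i F i * G i.
move=> C_ge0; have [C0 _|C_gt0] := eqVneq C 0.
  have G0 i : G i = 0.
    apply/eqP; rewrite -sqrf_eq0; apply/eqP.
    exact: (psumr_eq0P (fun j _ => sqr_ge0 (G j)) C0).
  by rewrite /P big1 ?expr0n ?C0 ?mulr0 // => i _; rewrite G0 mulr0.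
have {C_gt0} : 0 < C by rewrite lt_def C_gt0.
nra.
Qed.

Lemma cauchy_schwarz F G : `|\sum_i F i * G i| <= l2norm F * l2norm G.
Proof.
rewrite -sqrtrM ?sumsq_ge0 // -sqrtr_sqr.
exact/ler_wsqrtr/cauchy_schwarz_sqr.
Qed.

End EuclideanNorm.

Lemma dot2_le_sqrt (R : realType) (a b c e : R) :
  a * c + b * e <= Num.sqrt (a ^+ 2 + b ^+ 2) * Num.sqrt (c ^+ 2 + e ^+ 2).
Proof.
rewrite -sqrtrM ?addr_ge0 ?sqr_ge0 //.
apply: le_trans (ler_norm _) _; rewrite -sqrtr_sqr; apply: ler_wsqrtr.
have : 0 <= (a * e - b * c) ^+ 2 := sqr_ge0 _.
nra.
Qed.

Section WeightedMean.
Variables (R : realType) (T : nat) (p : 'I_T -> R).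
Implicit Types (y w : 'I_T -> R) (B K : R).

Definition wmean y := \sum_t p t * y t.
Definition wcov y w := wmean (fun t => y t * w t) - wmean y * wmean w.

Lemma wmean0 : wmean (fun=> 0) = 0.
Proof. by rewrite /wmean big1 // => t _; rewrite mulr0. Qed.

Lemma wmean_lin (a : R) y w :
  wmean (fun t => a * y t + w t) = a * wmean y + wmean w.
Proof. by rewrite /wmean mulr_sumr -big_split; apply: eq_bigr => t _ /=; ring. Qed.

Lemma wcov_dev y w : wcov y w = wmean (fun t => (y t - wmean y) * w t).
Proof. by rewrite /wcov {3}/wmean mulr_sumr -sumrB; apply: eq_bigr => t _; ring. Qed.

(* Only [\sum_t p t <= 1] is assumed: softmax weights over an empty index set are all 0. *)
Hypothesis p_ge0 : forall t, 0 <= p t.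
Hypothesis p_sum_le1 : \sum_t p t <= 1.

Lemma wmean_le_cst K y : 0 <= K -> (forall t, y t <= K) -> wmean y <= K.
Proof.
move=> K_ge0 yK; apply: le_trans (_ : \sum_t p t * K <= K).
  by apply: ler_sum => t _; apply: ler_wpM2l.
by rewrite -mulr_suml -[leRHS]mul1r; apply: ler_wpM2r.
Qed.

Lemma wmean_norm_le K y : 0 <= K -> (forall t, `|y t| <= K) -> `|wmean y| <= K.
Proof.
move=> K_ge0 yK; apply: le_trans (ler_norm_sum _ _ _) _.
rewrite (eq_bigr (fun t => p t * `|y t|)) => [|t _]; last by rewrite normrM ger0_norm.
exact: wmean_le_cst.
Qed.

Lemma wvar_le B y : (forall t, `|y t| <= B) ->
  wmean (fun t => (y t - wmean y) ^+ 2) <= B ^+ 2.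
Proof.
move=> yB.
have dev_sq c : wmean (fun t => (y t - c) ^+ 2) =
    wmean (fun t => y t ^+ 2) - 2 * c * wmean y + c ^+ 2 * \sum_t p t.
  by rewrite /wmean !mulr_sumr -sumrB -big_split /=; apply: eq_bigr => t _; ring.
rewrite dev_sq; set m := wmean y.
have : 0 <= m ^+ 2 * (2 - \sum_t p t).
  by rewrite mulr_ge0 ?sqr_ge0 // subr_ge0 (le_trans p_sum_le1) // ler1n.
have : wmean (fun t => y t ^+ 2) <= B ^+ 2.
  apply: wmean_le_cst (sqr_ge0 _) _ => t.
  by rewrite -real_normK ?num_real // ler_sqr ?nnegrE ?(le_trans _ (yB t)).
nra.
Qed.

Lemma wmean_abs_dev_le B y : 0 <= B -> (forall t, `|y t| <= B) ->
  wmean (fun t => `|y t - wmean y|) <= B.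
Proof.
move=> B_ge0 yB; set m := wmean y.
(* Cauchy-Schwarz for the factors sqrt (p t) and sqrt (p t) * `|y t - m|. *)
have sqrt_p t : Num.sqrt (p t) ^+ 2 = p t := sqr_sqrtr (p_ge0 t).
have dev_ge0 : 0 <= wmean (fun t => `|y t - m|).
  by apply: sumr_ge0 => t _; rewrite mulr_ge0.
rewrite -ler_sqr ?nnegrE //.
have -> : wmean (fun t => `|y t - m|) =
          \sum_t Num.sqrt (p t) * (Num.sqrt (p t) * `|y t - m|).
  by rewrite /wmean; apply: eq_bigr => t _; rewrite mulrA -expr2 sqrt_p.
apply: le_trans (cauchy_schwarz_sqr _ _) _.
under eq_bigr do rewrite sqrt_p.
rewrite [X in _ * X](eq_bigr (fun t => p t * (y t - m) ^+ 2)) => [|t _]; last first.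
  by rewrite exprMn sqrt_p real_normK ?num_real.
rewrite -[leRHS]mul1r; apply: ler_pM => //; first exact: sumr_ge0.
  by apply: sumr_ge0 => t _; rewrite mulr_ge0 ?sqr_ge0.
exact: wvar_le.
Qed.

Lemma wcov_le B K y w : 0 <= B -> 0 <= K ->
  (forall t, `|y t| <= B) -> (forall t, `|w t| <= K) -> `|wcov y w| <= B * K.
Proof.
move=> B_ge0 K_ge0 yB wK; rewrite wcov_dev.
apply: le_trans (ler_norm_sum _ _ _) _.
apply: le_trans (_ : wmean (fun t => `|y t - wmean y|) * K <= _); last first.
  by apply: ler_wpM2r => //; exact: wmean_abs_dev_le.
rewrite /wmean mulr_suml; apply: ler_sum => t _.
by rewrite !normrM (ger0_norm (p_ge0 t)) mulrA ler_wpM2l ?mulr_ge0.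
Qed.

End WeightedMean.

(** * Directional derivatives *)

Section DirectionalDerivative.
Variables (R : realType) (V : normedModType R).
Implicit Types (F : V -> R) (x v : V).

Lemma is_derive_linear F x v : linear F -> is_derive x v F (F v).
Proof.
move=> F_lin.
have F_quot : (fun h : R => h^-1 *: ((F \o shift x) (h *: v) - F x)) @ 0^' --> F v.
  apply: cvg_near_cst; near=> h.
  rewrite /= F_lin addrK scalerA mulVf ?scale1r //.
  near: h; exact: nbhs_dnbhs_neq.
by split; [exact: cvgP F_quot | exact: cvg_lim F_quot].
Unshelve. all: by end_near. Qed.

Lemma derive_along_line F x v :
  'D_v F x = 'D_1 (fun h : R => F (h *: v + x)) 0.
Proof.
rewrite /derive; set quot1 := fun h => h^-1 *: _; set quot2 := fun h => h^-1 *: _.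
suff -> : quot1 = quot2 by [].
by apply/funext => h; rewrite /quot1 /quot2 /= addr0 scale0r add0r [_%:A]mulr1.
Qed.

Lemma is_derive_comp F (s : R -> R) x v dF :
  is_derive x v F dF -> derivable s (F x) 1 ->
  is_derive x v (fun y => s (F y)) (derive1 s (F x) * dF).
Proof.
move=> [F_der <-] s_der.
pose phi (h : R) : R := F (h *: v + x).
have phi_der : derivable phi 0 1 := (derivable1P F x v).1 F_der.
have phi0 : phi 0 = F x by rewrite /phi scale0r add0r.
have s_der' : derivable s (phi 0) 1 by rewrite phi0.
have comp_der : derivable (s \o phi) 0 1.
  by apply/derivable1_diffP/differentiable_comp; apply/derivable1_diffP.
split; first exact/derivable1P.
rewrite derive_along_line -derive1E.
rewrite (_ : (fun h : R => s (F (h *: v + x))) = s \o phi) //.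
rewrite (derive1_comp phi_der s_der') phi0.
by rewrite !derive1E derive_along_line.
Qed.

Lemma is_derive_line F x v t dF :
  is_derive (x + t *: v) v F dF -> is_derive t 1 (fun s => F (x + s *: v)) dF.
Proof.
have quot_eq : (fun h : R => h^-1 *: (((fun s => F (x + s *: v)) \o shift t) (h *: 1)
                 - F (x + t *: v))) =
               (fun h : R => h^-1 *: ((F \o shift (x + t *: v)) (h *: v) - F (x + t *: v))).
  apply/funext => h /=; congr (_ *: (_ - _)); congr F.
  by rewrite [_%:A]mulr1 scalerDl addrCA.
move=> [F_der F_D]; split.
  by rewrite /derivable quot_eq.
by rewrite /derive quot_eq.
Qed.

Lemma mean_value_bound F (dF : V -> R) x v (K : R) :
  (forall y, is_derive y v F (dF y)) ->
  (forall s, 0 <= s <= 1 -> `|dF (x + s *: v)| <= K) ->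
  `|F (x + v) - F x| <= K.
Proof.
move=> F_der dF_le.
have line_der (s : R) : is_derive s 1 (fun s : R => F (x + s *: v)) (dF (x + s *: v)).
  exact: is_derive_line.
have line_cont : {within `[0, 1], continuous (fun s : R => F (x + s *: v))}.
  by apply: derivable_within_continuous => s _; case: (line_der s).
have [c c01] := MVT_segment ler01 (fun s _ => line_der s) line_cont.
rewrite /= scale1r scale0r addr0 subr0 mulr1 => ->.
by apply: dF_le; rewrite !(itvP c01).
Qed.

End DirectionalDerivative.

Section RowLinear.
Variables (R : realType) (n : nat) (F : 'rV[R]_n -> R).
Hypothesis F_lin : linear F.

Lemma linear_row_expand v : F v = \sum_k v 0 k * F (delta_mx 0 k).
Proof.
pose FL : {linear 'rV[R]_n -> R} := HB.pack F (GRing.isLinear.Build _ _ _ _ _ F_lin).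
rewrite -[F v]/(FL v) {1}(row_sum_delta v) linear_sum.
by apply: eq_bigr => k _; rewrite linearZ.
Qed.

Lemma linear_row_differentiable x : differentiable F x.
Proof.
have -> : F = \sum_k (fun v : 'rV[R]_n => v 0 k * F (delta_mx 0 k)).
  by apply/funext => v; rewrite fct_sumE linear_row_expand.
apply: differentiable_sum => k.
apply: (@differentiableM _ _ (fun v : 'rV[R]_n => v 0 k) (cst (F (delta_mx 0 k)))).
  exact: differentiable_coord.
exact: differentiable_cst.
Qed.

End RowLinear.

(** * Softmax-weighted means *)

Section Softmax.
Variables (R : realType) (T : nat).
Implicit Types (z y : 'I_T -> R) (p : 'I_T -> R).

Definition softw z t := expR (z t) / \sum_s expR (z s).

Lemma softw_ge0 z t : 0 <= softw z t.
Proof. by rewrite divr_ge0 ?expR_ge0 // sumr_ge0 // => s _; exact: expR_ge0. Qed.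

Lemma softw_sum_le1 z : \sum_t softw z t <= 1.
Proof.
rewrite -mulr_suml; have [->|D_neq0] := eqVneq (\sum_t expR (z t)) 0.
  by rewrite invr0 mulr0.
by rewrite mulfV.
Qed.

Lemma wmean_softw z y :
  wmean (softw z) y = (\sum_t expR (z t) * y t) / \sum_t expR (z t).
Proof. by rewrite /wmean mulr_suml; apply: eq_bigr => t _; rewrite mulrAC. Qed.

Lemma sum_expR_gt0 z : (0 < T)%N -> 0 < \sum_t expR (z t).
Proof.
move=> T_gt0; rewrite (bigD1 (Ordinal T_gt0)) //= ltr_pwDl ?expR_gt0 //.
by rewrite sumr_ge0 // => t _; exact: expR_ge0.
Qed.

Lemma wmean_ord0 p y : T = 0%N -> wmean p y = 0.
Proof. by move=> T0; rewrite /wmean big1 // => t; move: (ltn_ord t); rewrite {2}T0. Qed.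

End Softmax.

Section SoftmaxMean.
Variables (R : realType) (V : normedModType R) (T : nat).
Variables (z y : V -> 'I_T -> R).

Lemma is_derive_softmax_mean x v (dz dy : 'I_T -> R) :
  (forall t, is_derive x v (z ^~ t) (dz t)) ->
  (forall t, is_derive x v (y ^~ t) (dy t)) ->
  is_derive x v (fun th => wmean (softw (z th)) (y th))
    (wmean (softw (z x)) dy + wcov (softw (z x)) (y x) dz).
Proof.
move=> z_der y_der.
have [T0|T_gt0] := posnP T.
  rewrite /wcov !wmean_ord0 // mulr0 subr0 addr0.
  rewrite (_ : (fun th => _) = cst 0); first exact: is_derive_cst.
  by apply/funext => th; rewrite wmean_ord0.
pose E th t := expR (z th t).
have E_der t : is_derive x v (E ^~ t) (E x t * dz t).
  by have := is_derive_comp (z_der t) (@derivable_expR R (z x t)); rewrite derive1E derive_val.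
have D_der : is_derive x v (fun th => \sum_t E th t) (\sum_t E x t * dz t).
  by have := is_derive_sum E_der; rewrite fct_sumE.
have N_der : is_derive x v (fun th => \sum_t E th t * y th t)
               (\sum_t E x t * dy t + \sum_t E x t * (y x t * dz t)).
  have := is_derive_sum (fun t => is_deriveM (E_der t) (y_der t)).
  rewrite fct_sumE -big_split => N_der; apply: is_derive_eq N_der _.
  by apply: eq_bigr => t _; rewrite /GRing.scale /=; ring.
have D_neq0 th : \sum_t E th t != 0 by rewrite gt_eqF // sum_expR_gt0.
have invD_der : is_derive x v (fun th => (\sum_t E th t)^-1)
                  (- (\sum_t E x t) ^- 2 * \sum_t E x t * dz t).
  case: D_der => D_dvb D_D; split; first exact: derivableV.
  by rewrite deriveV // D_D.
have := is_deriveM N_der invD_der.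
rewrite (_ : _ * _ = fun th => wmean (softw (z th)) (y th)); last first.
  by apply/funext => th; rewrite wmean_softw.
move=> M_der; apply: is_derive_eq M_der _.
rewrite /wcov !wmean_softw /E /GRing.scale /=.
by field; rewrite -/(E x); exact: D_neq0.
Qed.

Lemma differentiable_softmax_mean x :
  (forall t, differentiable (z ^~ t) x) -> (forall t, differentiable (y ^~ t) x) ->
  differentiable (fun th => wmean (softw (z th)) (y th)) x.
Proof.
move=> z_diff y_diff.
have [T0|T_gt0] := posnP T.
  rewrite (_ : (fun th => _) = cst 0); first exact: differentiable_cst.
  by apply/funext => th; rewrite wmean_ord0.
have E_diff t : differentiable (fun th => expR (z th t)) x.
  exact/(differentiable_comp (z_diff t))/derivable1_diffP/derivable_expR.
have D_diff : differentiable (fun th => \sum_t expR (z th t)) x.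
  by rewrite -fct_sumE; apply: differentiable_sum.
rewrite (_ : (fun th => _) = (\sum_t (fun th => expR (z th t) * y th t)) *
                             (fun th => (\sum_t expR (z th t))^-1)); last first.
  by apply/funext => th; rewrite /= fct_sumE wmean_softw.
apply: differentiableM.
  by apply: differentiable_sum => t; exact: differentiableM.
by apply: differentiableV D_diff _; rewrite gt_eqF // sum_expR_gt0.
Qed.

End SoftmaxMean.

(** * The attention network *)

Section MatrixNorms.
Variable R : realType.

Lemma trmx_mul_col_le (d T : nat) (X : 'M[R]_(d, T)) (u : 'cV[R]_d) t :
  `|(X^T *m u) t 0| <= enormc (col t X) * enormc u.
Proof.
rewrite mxE (eq_bigr (fun j => col t X j 0 * u j 0)) => [|j _]; last by rewrite !mxE.
exact: cauchy_schwarz.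
Qed.

Lemma enormc_mulmx_le (m n : nat) (W : 'M[R]_(m, n)) (u : 'cV[R]_n) :
  enormc (W *m u) <= fnorm W * enormc u.
Proof.
rewrite /fnorm /enormc -sqrtrM; last by apply: sumr_ge0 => i _; exact: sumsq_ge0.
apply: ler_wsqrtr; rewrite mulr_suml; apply: ler_sum => i _.
rewrite mxE; exact: cauchy_schwarz_sqr.
Qed.

Variable d : nat.
Implicit Types v : 'rV[R]_(d + d * d).

Lemma sqr_enormr_split v : enormr v ^+ 2 = enormc (thU v) ^+ 2 + fnorm (thW v) ^+ 2.
Proof.
rewrite /enormr /enormc /fnorm !sqr_sqrtr ?sumsq_ge0 //; last first.
  by apply: sumr_ge0 => i _; exact: sumsq_ge0.
rewrite big_split_ord /=; congr (_ + _); first by apply: eq_bigr => i _; rewrite !mxE.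
rewrite pair_big /= (reindex (uncurry (@mxvec_index d d))) /=; last exact: curry_mxvec_bij.
by apply: eq_bigr => -[i j] _ /=; rewrite !mxE.
Qed.

Lemma enormr_split v : enormr v = Num.sqrt (enormc (thU v) ^+ 2 + fnorm (thW v) ^+ 2).
Proof. by rewrite -sqr_enormr_split sqrtr_sqr ger0_norm // sqrtr_ge0. Qed.

Lemma thU_le_enormr v : enormc (thU v) <= enormr v.
Proof. by rewrite -ler_sqr ?nnegrE ?sqrtr_ge0 // sqr_enormr_split lerDl sqr_ge0. Qed.

Lemma thW_le_enormr v : fnorm (thW v) <= enormr v.
Proof. by rewrite -ler_sqr ?nnegrE ?sqrtr_ge0 // sqr_enormr_split lerDr sqr_ge0. Qed.

Lemma thU_linear : linear (@thU R d).
Proof. by move=> a u v; apply/matrixP => i j; rewrite !mxE. Qed.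

Lemma thW_linear : linear (@thW R d).
Proof. by move=> a u v; apply/matrixP => i j; rewrite !mxE. Qed.

End MatrixNorms.

Lemma linear_segment_le (R : realType) (V : lmodType R) (F : V -> R) (K : R) x y s :
  linear F -> `|F x| <= K -> `|F y| <= K -> 0 <= s <= 1 ->
  `|F (y + s *: (x - y))| <= K.
Proof.
move=> F_lin Fx_le Fy_le /andP[s_ge0 s_le1].
pose FL : {linear V -> R} := HB.pack F (GRing.isLinear.Build _ _ _ _ _ F_lin).
have -> : F (y + s *: (x - y)) = (1 - s) * F y + s * F x.
  rewrite -[F _]/(FL _) linearD linearZ linearB.
  by change (F y + s * (F x - F y) = (1 - s) * F y + s * F x); ring.
have s'_ge0 : 0 <= 1 - s by rewrite subr_ge0.
apply: le_trans (ler_normD _ _) _.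
rewrite !normrM (ger0_norm s_ge0) (ger0_norm s'_ge0).
have := ler_wpM2l s_ge0 Fx_le; have := ler_wpM2l s'_ge0 Fy_le.
lra.
Qed.

Section Attention.
Variables (R : realType) (d T : nat) (X : 'M[R]_(d, T)) (q : 'cV[R]_d).
Local Notation V := 'rV[R]_(d + d * d).
Implicit Types (th x v w : V) (t : 'I_T).

(* [score th t] is X_t^T U, [logit th t] is X_t^T W q, and [preact th] is U^T a(X; W). *)
Definition score th t := (X^T *m thU th) t 0.
Definition logit th t := (X^T *m thW th *m q) t 0.
Definition preact th := wmean (softw (logit th)) (score th).

Lemma hth_preact sigma th : hth sigma X q th = sigma (preact th).
Proof.
rewrite /hth /hnet /attn mulmxA mxE; congr sigma; apply: eq_bigr => t _.
have -> : softmax (X^T *m thW th *m q) t 0 = softw (logit th) t by rewrite mxE.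
have -> : ((thU th)^T *m X) 0 t = score th t.
  by rewrite /score !mxE; apply: eq_bigr => j _; rewrite !mxE mulrC.
exact: mulrC.
Qed.

Lemma score_linear t : linear (score ^~ t).
Proof. by move=> a u v; rewrite /score thU_linear mulmxDr -scalemxAr !mxE. Qed.

Lemma logit_linear t : linear (logit ^~ t).
Proof.
by move=> a u v; rewrite /logit thW_linear mulmxDr mulmxDl -scalemxAr -scalemxAl !mxE.
Qed.

Local Notation attw x := (softw (logit x)).

Definition preact_der x v := wmean (attw x) (score v) + wcov (attw x) (score x) (logit v).

Definition preact_der2 x v w :=
  wcov (attw x) (score w) (logit v)
  + (wmean (attw x) (fun t => score v t * logit w t)
     + wcov (attw x) (fun t => score x t * logit w t) (logit v))
  - (preact x * wcov (attw x) (logit w) (logit v) + wmean (attw x) (logit w) * preact_der x v).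

Lemma is_derive_score x v t : is_derive x v (score ^~ t) (score v t).
Proof. exact/is_derive_linear/score_linear. Qed.

Lemma is_derive_logit x v t : is_derive x v (logit ^~ t) (logit v t).
Proof. exact/is_derive_linear/logit_linear. Qed.

Lemma is_derive_preact x v : is_derive x v preact (preact_der x v).
Proof. exact: is_derive_softmax_mean (is_derive_logit x v) (is_derive_score x v). Qed.

Lemma preact_differentiable x : differentiable preact x.
Proof.
by apply: differentiable_softmax_mean => t; apply: linear_row_differentiable;
  [exact: logit_linear | exact: score_linear].
Qed.

Lemma preact_der_linear x : linear (preact_der x).
Proof.
move=> a u w; rewrite /preact_der /wcov.
have score_lin : score (a *: u + w) = fun t => a * score u t + score w t.
  by apply/funext => t; exact: score_linear.
have logit_lin : logit (a *: u + w) = fun t => a * logit u t + logit w t.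
  by apply/funext => t; exact: logit_linear.
rewrite score_lin logit_lin.
have -> : (fun t => score x t * (a * logit u t + logit w t)) =
          (fun t => a * (score x t * logit u t) + score x t * logit w t).
  by apply/funext => t; ring.
rewrite !wmean_lin -[a *: _]/(a * _); ring.
Qed.

Lemma is_derive_preact_der x v w : is_derive x v (preact_der ^~ w) (preact_der2 x v w).
Proof.
have cst_der (c : 'I_T -> R) t : is_derive x v (fun=> c t) 0 := is_derive_cst _ _ _.
have score_logit_der t :
    is_derive x v (fun th => score th t * logit w t) (score v t * logit w t).
  by apply: is_derive_linear => a u u'; rewrite score_linear /GRing.scale /=; ring.
have := is_deriveB
  (is_deriveD (is_derive_softmax_mean (y := fun=> score w) (is_derive_logit x v) (cst_der _))
              (is_derive_softmax_mean (is_derive_logit x v) score_logit_der))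
  (is_deriveM (is_derive_preact x v)
              (is_derive_softmax_mean (y := fun=> logit w) (is_derive_logit x v) (cst_der _))).
rewrite (_ : _ - _ = preact_der ^~ w); last first.
  by apply/funext => th; rewrite /preact_der /wcov /= addrA.
move=> sum_der; apply: is_derive_eq sum_der _.
by rewrite /preact_der2 !wmean0 !add0r /GRing.scale /=.
Qed.

Hypothesis X_col_le1 : forall t, enormc (col t X) <= 1.
Hypothesis q_le1 : enormc q <= 1.
Local Notation nU v := (enormc (thU v)).
Local Notation nW v := (fnorm (thW v)).

Lemma trmx_mul_le (u : 'cV[R]_d) t : `|(X^T *m u) t 0| <= enormc u.
Proof.
apply: le_trans (trmx_mul_col_le X u t) _.
by rewrite -[leRHS]mul1r ler_wpM2r ?sqrtr_ge0.
Qed.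

Lemma score_le v t : `|score v t| <= nU v.
Proof. exact: trmx_mul_le. Qed.

Lemma logit_le v t : `|logit v t| <= nW v.
Proof.
rewrite /logit -mulmxA; apply: le_trans (trmx_mul_le _ t) _.
apply: le_trans (enormc_mulmx_le _ _) _.
by rewrite -[leRHS]mulr1 ler_wpM2l ?sqrtr_ge0.
Qed.

Lemma score_le_shift v (u0 : 'cV[R]_d) t :
  `|score v t| <= enormc u0 + enormc (thU v - u0).
Proof.
rewrite /score -{1}(subrKC u0 (thU v)) mulmxDr mxE.
by apply: le_trans (ler_normD _ _) _; rewrite lerD ?trmx_mul_le.
Qed.

Variables (B : R) (x : V).
Hypothesis B_ge0 : 0 <= B.
Hypothesis score_x_le : forall t, `|score x t| <= B.

Let mean_le := wmean_norm_le (@softw_ge0 _ _ (logit x)) (softw_sum_le1 (logit x)).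
Let cov_le := wcov_le (@softw_ge0 _ _ (logit x)) (softw_sum_le1 (logit x)).

Lemma preact_der_bound v : `|preact_der x v| <= nU v + B * nW v.
Proof.
apply: le_trans (ler_normD _ _) _; apply: lerD.
  by apply: mean_le; [exact: sqrtr_ge0 | exact: score_le].
by apply: cov_le => //; [exact: sqrtr_ge0 | exact: logit_le].
Qed.

Lemma preact_der2_bound v w : `|preact_der2 x v w| <=
  nU w * nW v + 2 * (nU v * nW w) + 3 * B * (nW v * nW w).
Proof.
have term1 : `|wcov (attw x) (score w) (logit v)| <= nU w * nW v.
  by apply: cov_le => [||t|t]; rewrite ?sqrtr_ge0 ?score_le ?logit_le.
have term2 : `|wmean (attw x) (fun t => score v t * logit w t)| <= nU v * nW w.
  apply: mean_le => [|t]; first by rewrite mulr_ge0 ?sqrtr_ge0.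
  by rewrite normrM; apply: ler_pM; rewrite ?normr_ge0 ?score_le ?logit_le.
have term3 : `|wcov (attw x) (fun t => score x t * logit w t) (logit v)| <= B * nW w * nW v.
  apply: cov_le => [||t|t]; [by rewrite mulr_ge0 ?sqrtr_ge0 | exact: sqrtr_ge0 | | exact: logit_le].
  by rewrite normrM; apply: ler_pM; rewrite ?normr_ge0 ?score_x_le ?logit_le.
have term4 : `|preact x * wcov (attw x) (logit w) (logit v)| <= B * (nW w * nW v).
  rewrite normrM; apply: ler_pM; rewrite ?normr_ge0 ?mean_le //.
  by apply: cov_le => [||t|t]; rewrite ?sqrtr_ge0 ?logit_le.
have term5 : `|wmean (attw x) (logit w) * preact_der x v| <= nW w * (nU v + B * nW v).
  rewrite normrM; apply: ler_pM; rewrite ?normr_ge0 ?preact_der_bound //.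
  by apply: mean_le => [|t]; rewrite ?sqrtr_ge0 ?logit_le.
have tri (a b c e f : R) : `|a + (b + c) - (e + f)| <= `|a| + `|b| + `|c| + `|e| + `|f|.
  have := ler_normB (a + (b + c)) (e + f); have := ler_normD a (b + c).
  have := ler_normD b c; have := ler_normD e f; lra.
apply: le_trans (tri _ _ _ _ _) _.
lra.
Qed.

Lemma preact_der_le v : `|preact_der x v| <= Num.sqrt (1 + B ^+ 2) * enormr v.
Proof.
apply: le_trans (preact_der_bound v) _.
by have := dot2_le_sqrt 1 B (nU v) (nW v); rewrite expr1n mul1r -enormr_split.
Qed.

Lemma preact_der2_le v w :
  `|preact_der2 x v w| <= 5 * Num.sqrt (1 + B ^+ 2) * (enormr v * enormr w).
Proof.
set S := Num.sqrt (1 + B ^+ 2); set N := enormr v * enormr w.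
have S_ge1 : 1 <= S by rewrite -sqrtr1 ler_wsqrtr // lerDl sqr_ge0.
have B_le_S : B <= S by rewrite -[B]ger0_norm // -sqrtr_sqr ler_wsqrtr // lerDr.
have N_ge0 : 0 <= N by rewrite mulr_ge0 ?sqrtr_ge0.
have cross : nU v * nW w + nW v * nU w <= N.
  by have := dot2_le_sqrt (nU v) (nW v) (nW w) (nU w); rewrite [_ + nU w ^+ 2]addrC -!enormr_split.
have UW : nU v * nW w <= N by apply: ler_pM; rewrite ?sqrtr_ge0 ?thU_le_enormr ?thW_le_enormr.
have WW : nW v * nW w <= N by apply: ler_pM; rewrite ?sqrtr_ge0 ?thW_le_enormr.
have BWW : B * (nW v * nW w) <= S * N by apply: ler_pM; rewrite ?mulr_ge0 ?sqrtr_ge0.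
have N_le_SN : N <= S * N by rewrite ler_peMl.
apply: le_trans (preact_der2_bound v w) _.
lra.
Qed.

End Attention.

Section RowGradient.
Variables (R : realType) (n : nat).
Variables (F : 'rV[R]_n -> R) (DF : 'rV[R]_n -> 'rV[R]_n -> R).
Hypothesis F_der : forall x v, is_derive x v F (DF x v).
Hypothesis DF_linear : forall x, linear (DF x).

Lemma grad_dot x (w : 'rV[R]_n) : \sum_k w 0 k * grad F x 0 k = DF x w.
Proof.
rewrite (linear_row_expand (DF_linear x) w); apply: eq_bigr => k _.
by rewrite mxE; case: (F_der x (delta_mx 0 k)) => _ ->.
Qed.

Lemma sqr_enormr_grad_sub (x y : 'rV[R]_n) : let w := grad F x - grad F y in
  enormr w ^+ 2 = DF x w - DF y w.
Proof.
move=> w; rewrite -!grad_dot -sumrB /enormr sqr_sqrtr ?sumsq_ge0 //.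
by apply: eq_bigr => k _; rewrite expr2 -mulrBr; congr (_ * _); rewrite /w !mxE.
Qed.

End RowGradient.

Section Smoothness.
Variables (R : realType) (d T : nat) (X : 'M[R]_(d, T)) (q : 'cV[R]_d).
Hypothesis X_col_le1 : forall t, enormc (col t X) <= 1.
Hypothesis q_le1 : enormc q <= 1.
Variables (sigma : R -> R) (s1 s2 : R).
Hypothesis sigma_der : forall x, derivable sigma x 1.
Hypothesis sigma'_der : forall x, derivable (derive1 sigma) x 1.
Hypothesis sigma'_le : forall x, `|derive1 sigma x| <= s1.
Hypothesis sigma''_le : forall x, `|derive1 (derive1 sigma) x| <= s2.
Variable B : R.
Hypothesis B_ge0 : 0 <= B.
Local Notation V := 'rV[R]_(d + d * d).
Local Notation f := (hth sigma X q).
Local Notation preact := (preact X q).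
Local Notation preact_der := (preact_der X q).
Local Notation S := (Num.sqrt (1 + B ^+ 2)).
Implicit Types x y v w : V.

Let s1_ge0 : 0 <= s1 := le_trans (normr_ge0 _) (sigma'_le 0).
Let s2_ge0 : 0 <= s2 := le_trans (normr_ge0 _) (sigma''_le 0).

Definition score_bounded x := forall t, `|score X x t| <= B.

Definition hth_der x v := derive1 sigma (preact x) * preact_der x v.

Definition hth_der2 x v w := derive1 sigma (preact x) * preact_der2 X q x v w
  + preact_der x w * (derive1 (derive1 sigma) (preact x) * preact_der x v).

Lemma is_derive_hth x v : is_derive x v f (hth_der x v).
Proof.
rewrite (_ : f = fun y => sigma (preact y)); last by apply/funext => y; rewrite hth_preact.
rewrite /hth_der; apply: is_derive_comp; [exact: is_derive_preact | exact: sigma_der].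
Qed.

Lemma hth_differentiable x : differentiable f x.
Proof.
rewrite (_ : f = sigma \o preact); last by apply/funext => y; rewrite /= hth_preact.
exact/(differentiable_comp (preact_differentiable X q x))/derivable1_diffP.
Qed.

Lemma hth_der_linear x : linear (hth_der x).
Proof. by move=> a u w; rewrite /hth_der preact_der_linear /GRing.scale /=; ring. Qed.

Lemma is_derive_hth_der x v w : is_derive x v (hth_der ^~ w) (hth_der2 x v w).
Proof.
have sigma'_preact : is_derive x v (fun y => derive1 sigma (preact y))
    (derive1 (derive1 sigma) (preact x) * preact_der x v).
  by apply: is_derive_comp; [exact: is_derive_preact | exact: sigma'_der].
exact: is_deriveM sigma'_preact (is_derive_preact_der X q x v w).
Qed.

Lemma segment_score_bounded x y s : score_bounded x -> score_bounded y ->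
  0 <= s <= 1 -> score_bounded (y + s *: (x - y)).
Proof. by move=> Bx By s01 t; exact: linear_segment_le (score_linear X t) (Bx t) (By t) s01. Qed.

Lemma hth_der_le x v : score_bounded x -> `|hth_der x v| <= s1 * S * enormr v.
Proof.
move=> Bx; rewrite normrM -mulrA.
by apply: ler_pM; rewrite ?normr_ge0 ?sigma'_le ?preact_der_le.
Qed.

Lemma hth_der2_le x v w : score_bounded x ->
  `|hth_der2 x v w| <= (s2 * (1 + B ^+ 2) + 5 * s1 * S) * (enormr v * enormr w).
Proof.
move=> Bx.
have S_sqr : S ^+ 2 = 1 + B ^+ 2 by rewrite sqr_sqrtr // addr_ge0 ?sqr_ge0.
have first_order : `|derive1 sigma (preact x) * preact_der2 X q x v w| <=
          s1 * (5 * S * (enormr v * enormr w)).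
  by rewrite normrM; apply: ler_pM; rewrite ?normr_ge0 ?sigma'_le ?preact_der2_le.
have second_order : `|preact_der x w * (derive1 (derive1 sigma) (preact x) * preact_der x v)| <=
          s2 * (1 + B ^+ 2) * (enormr v * enormr w).
  rewrite -S_sqr (_ : s2 * S ^+ 2 * _ = S * enormr w * (s2 * (S * enormr v))); last by ring.
  rewrite !normrM; apply: ler_pM; rewrite ?normr_ge0 ?mulr_ge0 ?preact_der_le //.
  by apply: ler_pM; rewrite ?normr_ge0 ?sigma''_le ?preact_der_le.
apply: le_trans (ler_normD _ _) _; apply: le_trans (lerD first_order second_order) _.
lra.
Qed.

Lemma hth_lipschitz x y : score_bounded x -> score_bounded y ->
  `|f x - f y| <= s1 * S * enormr (x - y).
Proof.
move=> Bx By; rewrite -{1}(subrKC y x).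
apply: (mean_value_bound (dF := hth_der ^~ (x - y))) => [z|s s01].
  exact: is_derive_hth.
exact/hth_der_le/segment_score_bounded.
Qed.

Lemma grad_hth_lipschitz x y : score_bounded x -> score_bounded y ->
  enormr (grad f x - grad f y) <= (s2 * (1 + B ^+ 2) + 5 * s1 * S) * enormr (x - y).
Proof.
move=> Bx By; have := sqr_enormr_grad_sub is_derive_hth hth_der_linear x y.
set w := grad f x - grad f y; set L := _ + _ => sqr_w.
have mvt : `|hth_der x w - hth_der y w| <= L * enormr (x - y) * enormr w.
  rewrite -{1}(subrKC y x) -mulrA.
  apply: (mean_value_bound (F := hth_der ^~ w) (dF := fun z => hth_der2 z (x - y) w))
    => [z|s s01].
    exact: is_derive_hth_der.
  exact/hth_der2_le/segment_score_bounded.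
have [->|w_neq0] := eqVneq (enormr w) 0.
  by rewrite mulr_ge0 ?sqrtr_ge0 // addr_ge0 ?mulr_ge0 ?addr_ge0 ?sqr_ge0 ?sqrtr_ge0.
have w_gt0 : 0 < enormr w by rewrite lt_def w_neq0 sqrtr_ge0.
by rewrite -(ler_pM2r w_gt0) -expr2 sqr_w (le_trans (ler_norm _) mvt).
Qed.

End Smoothness.

Unset Implicit Arguments.
Theorem lemma2 (R : realType) (d T m : nat)
  (sigma : R -> R) (s0 s1 s2 : R) (rho_u rho_w dl : R)
  (X : 'M[R]_(d, T)) (q : 'cV[R]_d)
  (U0 : nat -> 'cV[R]_d) (W0 : nat -> 'M[R]_d) (c0 : nat -> R) :
  (forall x, derivable sigma x 1) ->
  (forall x, derivable (derive1 sigma) x 1) ->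
  (forall x, `|sigma x| <= s0) ->
  (forall x, `|derive1 sigma x| <= s1) ->
  (forall x, `|derive1 (derive1 sigma) x| <= s2) ->
  ~~ odd m -> 0 < rho_u -> 0 < rho_w ->
  0 < dl < 1 ->
  (forall t : 'I_T, enormc (col t X) <= 1) ->
  enormc q <= 1 ->
  (* symmetric initialization (realization) *)
  (forall i, (i < m./2)%N ->
     [/\ U0 (i + m./2)%N = U0 i, W0 (i + m./2)%N = W0 i & c0 (i + m./2)%N = - c0 i]) ->
  (* the event E_{U,m}(dl) *)
  (forall i, (i < m)%N ->
     enormc (U0 i) <= Num.sqrt d%:R + Num.sqrt (2 * ln (m%:R / (2 * dl)))) ->
  forall i, (i < m)%N ->
  let S := [set th : 'rV[R]_(d + d * d) |
             enormc (thU th - U0 i) <= rho_u / Num.sqrt m%:R /\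
             fnorm (thW th - W0 i) <= rho_w / Num.sqrt m%:R]%classic in
  let f := hth sigma X q in
  (forall th, S th -> differentiable f th) /\
  (forall th th', S th -> S th' ->
     `|f th - f th'| <= L1m s1 d m dl rho_u * enormr (th - th')) /\
  (forall th th', S th -> S th' ->
     enormr (grad f th - grad f th') <= L2m s1 s2 d m dl rho_u * enormr (th - th')).
Proof.
move=> sigma_der sigma'_der _ sigma'_le sigma''_le _ rho_u_gt0 _ _ X_col_le1 q_le1 _
  U0_le i i_lt_m S f; rewrite {}/f.
set B := B_Um d m dl rho_u.
have B_ge0 : 0 <= B by rewrite !addr_ge0 ?sqrtr_ge0 // divr_ge0 ?sqrtr_ge0 ?ltW.
have S_bounded th : S th -> score_bounded X B th.
  move=> [U_near _] t; apply: le_trans (score_le_shift X_col_le1 th (U0 i) t) _.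
  exact: lerD (U0_le i i_lt_m) U_near.
split; [|split].
- by move=> th _; exact: hth_differentiable.
- move=> th th' /S_bounded Bth /S_bounded Bth'.
  apply: (hth_lipschitz X_col_le1 q_le1 _ _ B_ge0 Bth Bth') => x.
    exact: sigma_der.
  exact: sigma'_le.
move=> th th' /S_bounded Bth /S_bounded Bth'.
apply: le_trans (grad_hth_lipschitz X_col_le1 q_le1 sigma_der sigma'_der sigma'_le sigma''_le
  B_ge0 Bth Bth') _.
by rewrite ler_wpM2r ?sqrtr_ge0 // lerD2l ler_wpM2r ?sqrtr_ge0 // ler_wpM2r ?ler_nat
  // (le_trans (normr_ge0 _) (sigma'_le 0)).
Qed.
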